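(* Consider the following $\mathsf{HFOL}$ signatures (all sorts flexible, no modalities, no rigid symbols). $\Delta$ has nominals $k_1,k_2,k_3$, sorts $s_1,s_2,s_3$ and constants $c_1:\to s_1$, $c_2:\to s_2$, $c_3:\to s_3$. $\Delta^1$ has nominals $k,k_3$, one sort $s$, constants $c:\to s$, $c_3:\to s$. $\Delta^2$ has nominals $k,k_1$, sorts $s,s_2$, constants $c_1:\to s$, $c_2:\to s_2$, $c_3:\to s$. $\Delta'$ has one nominal $k$, one sort $s$, constants $c:\to s$, $c_3:\to s$. Let $\chi_1:\Delta\to\Delta^1$ map $k_1,k_2\mapsto k$, $k_3\mapsto k_3$, all $s_i\mapsto s$, $c_1,c_2\mapsto c$, $c_3\mapsto c_3$; let $\chi_2:\Delta\to\Delta^2$ map $k_1\mapsto k_1$, $k_2,k_3\mapsto k$, $s_1,s_3\mapsto s$, $s_2\mapsto s_2$, $c_i\mapsto c_i$; let $\upsilon_1:\Delta^1\to\Delta'$ map $k,k_3\mapsto k$, $c\mapsto c$, $c_3\mapsto c_3$; let $\upsilon_2:\Delta^2\to\Delta'$ map $k,k_1\mapsto k$, $s,s_2\mapsto s$, $c_1,c_2\mapsto c$, $c_3\mapsto c_3$. (This square is a pushout.) Then this square is not a Craig Interpolation square.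
   Context: $\mathsf{HFOL}$ (hybrid first-order logic with rigid symbols): signatures $\Delta=(\Sigma^{\mathtt n},\Sigma^{\mathtt r}\subseteq\Sigma)$ with $\Sigma$ a many-sorted first-order signature, $\Sigma^{\mathtt r}$ its rigid part, $\Sigma^{\mathtt n}$ a single-sorted signature of nominals (constants) and modalities; signature morphisms are pairs of first-order signature morphisms preserving rigid symbols. Kripke structures $(W,M)$: a $\Sigma^{\mathtt n}$-structure $W$ of worlds and $\Sigma$-structures $M_w$ agreeing on rigid symbols. Sentences are built from atoms (nominals, unary modalities, equations and relations between hybrid terms, where $@_k\sigma$ denotes $\sigma$ evaluated at world $W_k$) using $@_k$, $\neg$, finite $\vee$, store $\downarrow z$, existential quantification over nominal and rigid variables, and $\langle\lambda\rangle$; $(W,M)\models\varphi$ means $\varphi$ holds at every world; $\Phi\models\Psi$ is global consequence. Sentences translate along signature morphisms by renaming symbols. A commutative square $\chi_1:\Delta\to\Delta^1$, $\chi_2:\Delta\to\Delta^2$, $\upsilon_1:\Delta^1\to\Delta'$, $\upsilon_2:\Delta^2\to\Delta'$ is a Craig Interpolation (CI) square if for all $\Phi^1\subseteq\mathrm{Sen}(\Delta^1)$, $\Phi^2\subseteq\mathrm{Sen}(\Delta^2)$ with $\upsilon_1(\Phi^1)\models\upsilon_2(\Phi^2)$ there is $\Phi\subseteq\mathrm{Sen}(\Delta)$ with $\Phi^1\models\chi_1(\Phi)$ and $\chi_2(\Phi)\models\Phi^2$. *)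

(* A fragment of HFOL sufficient for the signatures of
   Lemma 3.5: signatures whose only symbols are nominals, (flexible) sorts
   and constants; no modalities, no relation symbols, no rigid symbols. *)
From Stdlib Require Import List.
Import ListNotations.
Set Implicit Arguments.

Record hsig := HSig {
  Nom : Type;
  Srt : Type;
  Cst : Type;
  csort : Cst -> Srt
}.

Record hmor (D D' : hsig) := HMor {
  mN : Nom D -> Nom D';
  mS : Srt D -> Srt D';
  mC : Cst D -> Cst D';
  mC_sort : forall c, csort D' (mC c) = mS (csort D c)
}.

(* ---------- sentences ----------
   [sen C N] : sentences over constants C and nominals N; binders (store
   and existential quantification over a nominal variable) extend the set
   of nominals by one fresh nominal (de Bruijn style, [None]).
   Hybrid terms: since there are no rigid sorts, the only hybrid terms of
   these signatures are the constants.  An equation is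
   [SEq c c'] meaning c = c'; well-sortedness is imposed by [wf]. *)
Inductive sen (C : Type) (N : Type) : Type :=
| SNom   : N -> sen C N
| SEq    : C -> C -> sen C N
| SAt    : N -> sen C N -> sen C N
| SNeg   : sen C N -> sen C N
| SOr    : list (sen C N) -> sen C N
| SStore : sen C (option N) -> sen C N
| SEx    : sen C (option N) -> sen C N.

Arguments SNom {C N}. Arguments SEq {C N}. Arguments SAt {C N}.
Arguments SNeg {C N}. Arguments SOr {C N}. Arguments SStore {C N}.
Arguments SEx {C N}.

Fixpoint wf (D : hsig) (N : Type) (phi : sen (Cst D) N) {struct phi} : Prop :=
  match phi with
  | SNom _ => True
  | SEq c c' => csort D c = csort D c'
  | SAt _ p => wf D p
  | SNeg p => wf D p
  | SOr l => (fix wfl (l : list (sen (Cst D) N)) : Prop :=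
               match l with [] => True | p :: r => wf D p /\ wfl r end) l
  | SStore p => wf D p
  | SEx p => wf D p
  end.

Definition Sen (D : hsig) (phi : sen (Cst D) (Nom D)) : Prop := wf D phi.

Fixpoint tr (C C' : Type) (g : C -> C') (N N' : Type) (f : N -> N')
         (phi : sen C N) {struct phi} : sen C' N' :=
  match phi with
  | SNom k => SNom (f k)
  | SEq c c' => SEq (g c) (g c')
  | SAt k p => SAt (f k) (tr g f p)
  | SNeg p => SNeg (tr g f p)
  | SOr l => SOr ((fix trl (l : list (sen C N)) : list (sen C' N') :=
                    match l with [] => [] | p :: r => tr g f p :: trl r end) l)
  | SStore p => SStore (tr g (option_map f) p)
  | SEx p => SEx (tr g (option_map f) p)
  end.

Definition trans {D D' : hsig} (m : hmor D D') (phi : sen (Cst D) (Nom D))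
  : sen (Cst D') (Nom D') := tr (mC m) (mN m) phi.

Definition trans_set {D D' : hsig} (m : hmor D D')
  (Phi : sen (Cst D) (Nom D) -> Prop) : sen (Cst D') (Nom D') -> Prop :=
  fun psi => exists phi, Phi phi /\ psi = trans m phi.

(* ---------- Kripke structures ----------
   W : set of worlds with an interpretation of the nominals;
   M_w : a Sigma-structure for every world w (carriers may vary with w,
   since all sorts are flexible; no rigid symbols, hence no agreement
   condition). *)
Record kripke (D : hsig) := Kripke {
  World : Type;
  nomI : Nom D -> World;
  Car : World -> Srt D -> Type;
  cstI : forall (w : World) (c : Cst D), Car w (csort D c)
}.

Definition ext (W N : Type) (v : N -> W) (w : W) (o : option N) : W :=
  match o with Some n => v n | None => w end.

Fixpoint sat (D : hsig) (M : kripke D) (N : Type) (v : N -> World M)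
         (w : World M) (phi : sen (Cst D) N) {struct phi} : Prop :=
  match phi with
  | SNom k => w = v k
  | SEq c c' => existT (Car M w) (csort D c) (cstI M w c)
                = existT (Car M w) (csort D c') (cstI M w c')
  | SAt k p => sat M v (v k) p
  | SNeg p => ~ sat M v w p
  | SOr l => (fix satl (l : list (sen (Cst D) N)) : Prop :=
               match l with [] => False | p :: r => sat M v w p \/ satl r end) l
  | SStore p => sat M (ext v w) w p
  | SEx p => exists w' : World M, sat M (ext v w') w p
  end.

Definition models {D : hsig} (M : kripke D) (phi : sen (Cst D) (Nom D)) : Prop :=
  forall w : World M, sat M (nomI M) w phi.

Definition entails {D : hsig} (Phi Psi : sen (Cst D) (Nom D) -> Prop) : Prop :=
  forall M : kripke D, (forall phi, Phi phi -> models M phi) ->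
                       forall psi, Psi psi -> models M psi.

Definition CI_square (D D1 D2 D' : hsig)
  (chi1 : hmor D D1) (chi2 : hmor D D2) (u1 : hmor D1 D') (u2 : hmor D2 D') : Prop :=
  forall (Phi1 : sen (Cst D1) (Nom D1) -> Prop) (Phi2 : sen (Cst D2) (Nom D2) -> Prop),
    (forall phi, Phi1 phi -> Sen D1 phi) ->
    (forall phi, Phi2 phi -> Sen D2 phi) ->
    entails (trans_set u1 Phi1) (trans_set u2 Phi2) ->
    exists Phi : sen (Cst D) (Nom D) -> Prop,
      (forall phi, Phi phi -> Sen D phi) /\
      entails Phi1 (trans_set chi1 Phi) /\
      entails (trans_set chi2 Phi) Phi2.

Inductive N0 := k1_0 | k2_0 | k3_0.
Inductive S0 := s1_0 | s2_0 | s3_0.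
Inductive C0 := c1_0 | c2_0 | c3_0.
Definition cs0 (c : C0) : S0 :=
  match c with c1_0 => s1_0 | c2_0 => s2_0 | c3_0 => s3_0 end.
Definition Delta : hsig := @HSig N0 S0 C0 cs0.

Inductive N1 := k_1 | k3_1.
Inductive S1 := s_1.
Inductive C1 := c_1 | c3_1.
Definition cs1 (c : C1) : S1 := s_1.
Definition Delta1 : hsig := @HSig N1 S1 C1 cs1.

Inductive N2 := k_2 | k1_2.
Inductive S2 := s_2 | s2_2.
Inductive C2 := c1_2 | c2_2 | c3_2.
Definition cs2 (c : C2) : S2 :=
  match c with c1_2 => s_2 | c2_2 => s2_2 | c3_2 => s_2 end.
Definition Delta2 : hsig := @HSig N2 S2 C2 cs2.

Inductive N3 := k_3.
Inductive S3 := s_3.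
Inductive C3 := c_3 | c3_3.
Definition cs3 (c : C3) : S3 := s_3.
Definition Delta' : hsig := @HSig N3 S3 C3 cs3.

Definition chi1N (n : N0) : N1 := match n with k1_0 | k2_0 => k_1 | k3_0 => k3_1 end.
Definition chi1S (s : S0) : S1 := s_1.
Definition chi1C (c : C0) : C1 := match c with c1_0 | c2_0 => c_1 | c3_0 => c3_1 end.
Definition chi1 : hmor Delta Delta1 :=
  @HMor Delta Delta1 chi1N chi1S chi1C
    (fun c => match c with c1_0 | c2_0 | c3_0 => eq_refl end).

Definition chi2N (n : N0) : N2 := match n with k1_0 => k1_2 | k2_0 | k3_0 => k_2 end.
Definition chi2S (s : S0) : S2 := match s with s1_0 | s3_0 => s_2 | s2_0 => s2_2 end.
Definition chi2C (c : C0) : C2 :=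
  match c with c1_0 => c1_2 | c2_0 => c2_2 | c3_0 => c3_2 end.
Definition chi2 : hmor Delta Delta2 :=
  @HMor Delta Delta2 chi2N chi2S chi2C
    (fun c => match c with c1_0 | c2_0 | c3_0 => eq_refl end).

Definition u1N (n : N1) : N3 := k_3.
Definition u1S (s : S1) : S3 := s_3.
Definition u1C (c : C1) : C3 := match c with c_1 => c_3 | c3_1 => c3_3 end.
Definition upsilon1 : hmor Delta1 Delta' :=
  @HMor Delta1 Delta' u1N u1S u1C (fun c => match c with c_1 | c3_1 => eq_refl end).

Definition u2N (n : N2) : N3 := k_3.
Definition u2S (s : S2) : S3 := s_3.
Definition u2C (c : C2) : C3 :=
  match c with c1_2 | c2_2 => c_3 | c3_2 => c3_3 end.
Definition upsilon2 : hmor Delta2 Delta' :=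
  @HMor Delta2 Delta' u2N u2S u2C
    (fun c => match c with c1_2 | c2_2 | c3_2 => eq_refl end).

(* Take Phi1 = {c = c3} over Delta^1 and Phi2 = {c1 = c3} over Delta^2: both
   translate to c = c3 over Delta', so the translated entailment is trivial.
   In Delta every sort carries exactly one constant, so the only well-sorted
   equations are c_i = c_i and a Delta-sentence only speaks about worlds and
   nominals.  Hence it holds under chi1 in the one-point model of Delta^1 iff
   it holds under chi2 in a one-world model of Delta^2 where c1 and c3 are
   distinct.  The first model satisfies Phi1, hence every interpolant, and so
   the second one would satisfy Phi2, which it does not. *)
From Stdlib Require Import List.
Import ListNotations.

Section SenInd.

Variable C : Type.
Variable P : forall N : Type, sen C N -> Prop.

Hypothesis P_nom : forall N (k : N), P N (SNom k).
Hypothesis P_eq : forall N (c c' : C), P N (SEq c c').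
Hypothesis P_at : forall N (k : N) p, P N p -> P N (SAt k p).
Hypothesis P_neg : forall N (p : sen C N), P N p -> P N (SNeg p).
Hypothesis P_or : forall N (l : list (sen C N)), Forall (P N) l -> P N (SOr l).
Hypothesis P_store : forall N (p : sen C (option N)), P (option N) p -> P N (SStore p).
Hypothesis P_ex : forall N (p : sen C (option N)), P (option N) p -> P N (SEx p).

Fixpoint sen_ind_nested (N : Type) (phi : sen C N) {struct phi} : P N phi :=
  match phi with
  | SNom k => P_nom N k
  | SEq c c' => P_eq N c c'
  | SAt k p => P_at N k p (sen_ind_nested N p)
  | SNeg p => P_neg N p (sen_ind_nested N p)
  | SOr l => P_or N l ((fix go (l : list (sen C N)) : Forall (P N) l :=
                          match l with
                          | [] => Forall_nil _
                          | p :: r => Forall_cons _ (sen_ind_nested N p) (go r)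
                          end) l)
  | SStore p => P_store N p (sen_ind_nested _ p)
  | SEx p => P_ex N p (sen_ind_nested _ p)
  end.

End SenInd.

Lemma wf_SOr (D : hsig) N (l : list (sen (Cst D) N)) :
  wf D (SOr l) <-> Forall (@wf D N) l.
Proof.
  induction l as [|p r IH]; simpl.
  - split; auto.
  - rewrite Forall_cons_iff. simpl in IH. rewrite IH. reflexivity.
Qed.

Lemma tr_SOr C C' (g : C -> C') N N' (f : N -> N') (l : list (sen C N)) :
  tr g f (SOr l) = SOr (map (tr g f) l).
Proof.
  induction l as [|p r IH]; simpl; [reflexivity|].
  simpl in IH. congruence.
Qed.

Lemma sat_SOr (D : hsig) (M : kripke D) N (v : N -> World M) w
  (l : list (sen (Cst D) N)) :
  sat M v w (SOr l) <-> Exists (sat M v w) l.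
Proof.
  induction l as [|p r IH]; simpl.
  - split; [contradiction | intro H; inversion H].
  - rewrite Exists_cons. simpl in IH. rewrite IH. reflexivity.
Qed.

Section Transfer.

Variables D D1 D2 : hsig.
Hypothesis csort_inj : forall c c' : Cst D, csort D c = csort D c' -> c = c'.

Variables (g1 : Cst D -> Cst D1) (g2 : Cst D -> Cst D2).
Variables (M : kripke D1) (N : kripke D2) (h : World M -> World N).
Hypothesis h_inj : forall w w', h w = h w' -> w = w'.
Hypothesis h_surj : forall w', exists w, h w = w'.

Lemma ext_option_map_compat {Na Nb Nc} {f1 : Na -> Nb} {f2 : Na -> Nc} {v1 v2} w :
  (forall n, h (v1 (f1 n)) = v2 (f2 n)) ->
  forall n, h (ext v1 w (option_map f1 n)) = ext v2 (h w) (option_map f2 n).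
Proof. intros Hv [n|]; [apply Hv | reflexivity]. Qed.

(* [csort_inj] makes every well-sorted equation trivial, so only the frames
   matter. *)
Lemma sat_tr_iso Na (phi : sen (Cst D) Na) :
  forall Nb Nc (f1 : Na -> Nb) (f2 : Na -> Nc) v1 v2 w,
    (forall n, h (v1 (f1 n)) = v2 (f2 n)) -> wf D phi ->
    sat M v1 w (tr g1 f1 phi) <-> sat N v2 (h w) (tr g2 f2 phi).
Proof.
  induction phi as [Na k|Na c c'|Na k p IH|Na p IH|Na l IHl|Na p IH|Na p IH]
    using sen_ind_nested;
    intros Nb Nc f1 f2 v1 v2 w Hv Hwf.
  - simpl. rewrite <- Hv. split; [intros ->; reflexivity | apply h_inj].
  - simpl in Hwf |- *. apply csort_inj in Hwf as ->.
    split; intros _; reflexivity.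
  - simpl. rewrite <- Hv. exact (IH _ _ f1 f2 v1 v2 _ Hv Hwf).
  - simpl. now rewrite (IH _ _ f1 f2 v1 v2 w Hv Hwf).
  - rewrite !tr_SOr, !sat_SOr, !Exists_map.
    apply wf_SOr in Hwf.
    induction IHl as [|p r IHp _ IHr]; inversion_clear Hwf as [|? ? Hp Hr].
    + split; intro H; inversion H.
    + rewrite !Exists_cons, (IHr Hr), (IHp _ _ f1 f2 v1 v2 w Hv Hp).
      reflexivity.
  - exact (IH _ _ _ _ _ _ w (ext_option_map_compat w Hv) Hwf).
  - split.
    + intros [w' Hw']. exists (h w').
      apply (IH _ _ _ _ _ _ w (ext_option_map_compat w' Hv) Hwf), Hw'.
    + intros [w'' Hw'']. destruct (h_surj w'') as [w' <-]. exists w'.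
      apply (IH _ _ _ _ _ _ w (ext_option_map_compat w' Hv) Hwf), Hw''.
Qed.

End Transfer.

Definition point_model : kripke Delta1 :=
  @Kripke Delta1 unit (fun _ => tt) (fun _ _ => unit) (fun _ _ => tt).

Definition split_model : kripke Delta2 :=
  @Kripke Delta2 unit (fun _ => tt) (fun _ _ => bool)
    (fun _ c => match c with c1_2 => true | _ => false end).

Lemma cs0_inj (c c' : C0) : cs0 c = cs0 c' -> c = c'.
Proof. destruct c, c'; simpl; congruence. Qed.

Lemma models_chi1_point_chi2_split (phi : sen C0 N0) :
  Sen Delta phi -> models point_model (trans chi1 phi) ->
  models split_model (trans chi2 phi).
Proof.
  intros Hwf H w.
  apply (@sat_tr_iso Delta Delta1 Delta2 cs0_inj chi1C chi2C
           point_model split_model (fun w => w) (fun _ _ e => e)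
           (fun w => ex_intro _ w eq_refl) _ phi _ _ chi1N chi2N
           (nomI point_model) (nomI split_model) w (fun _ => eq_refl) Hwf).
  apply H.
Qed.

Lemma point_model_c_c3 : models point_model (SEq c_1 c3_1).
Proof. intros w. reflexivity. Qed.

Lemma split_model_not_c1_c3 : ~ models split_model (SEq c1_2 c3_2).
Proof.
  intros H. specialize (H tt). simpl in H.
  apply (f_equal (fun x : sigT (fun _ : S2 => bool) => projT2 x)) in H.
  discriminate.
Qed.

Theorem lemma3p5 : ~ CI_square chi1 chi2 upsilon1 upsilon2.
Proof.
  intros CI.
  destruct (CI (eq (SEq c_1 c3_1)) (eq (SEq c1_2 c3_2)))
    as [Phi [HSen [Hchi1 Hchi2]]].
  - intros phi <-. reflexivity.
  - intros phi <-. reflexivity.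
  - intros M HM psi [phi [<- ->]].
    apply HM. exists (SEq c_1 c3_1). split; reflexivity.
  - apply split_model_not_c1_c3.
    apply (Hchi2 split_model); [|reflexivity].
    intros psi [phi [HP ->]].
    apply models_chi1_point_chi2_split; [exact (HSen phi HP)|].
    apply (Hchi1 point_model); [intros ? <-; apply point_model_c_c3|].
    exists phi. split; [exact HP | reflexivity].
Qed.
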